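(* Let $(X,\tau)$ be a locally compact Hausdorff space that is non-compact, Lindelöf and zero-dimensional. If $\delta$ is a quasi-proximity compatible with $\tau$ such that $\mathcal{V}_\delta$ is transitive, then $|\pi(\delta)\cap T(\tau)|\ge 2^{2^{\aleph_0}}$.
   Context: Quasi-uniformities and quasi-proximities are in the sense of Fletcher–Lindgren; compatible means inducing $\tau$. $\pi(\delta)$ is the set of all quasi-uniformities inducing $\delta$, and $\mathcal{V}_\delta$ is its coarsest (totally bounded) element. A quasi-uniformity is transitive if it has a base of transitive entourages. $T(\tau)$ is the set of compatible transitive quasi-uniformities on $(X,\tau)$. *)

From Stdlib Require Import List.
Set Implicit Arguments.

Section Defs.
Set Implicit Arguments.
Variable X : Type.

Definition set := X -> Prop.
Definition rel := X -> X -> Prop.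
Definition fullset : set := fun _ => True.
Definition emptyset : set := fun _ => False.
Definition compl (A : set) : set := fun x => ~ A x.
Definition setU (A B : set) : set := fun x => A x \/ B x.
Definition single (x : X) : set := fun y => y = x.
Definition subset (A B : set) : Prop := forall x, A x -> B x.
Definition set_eq (A B : set) : Prop := forall x, A x <-> B x.

Definition is_topology (T : set -> Prop) : Prop :=
  T fullset /\ T emptyset /\
  (forall F : set -> Prop, (forall U, F U -> T U) ->
      T (fun x => exists U, F U /\ U x)) /\
  (forall U V, T U -> T V -> T (fun x => U x /\ V x)) /\
  (forall U V, set_eq U V -> T U -> T V).

Definition hausdorff (T : set -> Prop) : Prop :=
  forall x y, x <> y -> exists U V, T U /\ T V /\ U x /\ V y /\
      (forall z, U z -> V z -> False).

Definition compact (T : set -> Prop) (K : set) : Prop :=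
  forall F : set -> Prop, (forall U, F U -> T U) ->
    (forall x, K x -> exists U, F U /\ U x) ->
    exists l : list set, (forall U, In U l -> F U) /\
      (forall x, K x -> exists U, In U l /\ U x).

Definition locally_compact (T : set -> Prop) : Prop :=
  forall x, exists U K, T U /\ U x /\ subset U K /\ compact T K.

(* every open cover of X has a countable subcover (empty sets allowed as padding) *)
Definition lindelof (T : set -> Prop) : Prop :=
  forall F : set -> Prop, (forall U, F U -> T U) ->
    (forall x, exists U, F U /\ U x) ->
    exists g : nat -> set, (forall n, F (g n) \/ set_eq (g n) emptyset) /\
      (forall x, exists n, g n x).

Definition zero_dimensional (T : set -> Prop) : Prop :=
  forall U x, T U -> U x -> exists C, T C /\ T (compl C) /\ C x /\ subset C U.

Definition rsub (U V : rel) : Prop := forall x y, U x y -> V x y.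
Definition rcomp (U V : rel) : rel := fun x z => exists y, U x y /\ V y z.

Definition quasi_uniformity (Q : rel -> Prop) : Prop :=
  Q (fun _ _ => True) /\
  (forall U V, Q U -> rsub U V -> Q V) /\
  (forall U V, Q U -> Q V -> Q (fun x y => U x y /\ V x y)) /\
  (forall U, Q U -> forall x, U x x) /\
  (forall U, Q U -> exists V, Q V /\ rsub (rcomp V V) U).

Definition qu_topology (Q : rel -> Prop) (G : set) : Prop :=
  forall x, G x -> exists U, Q U /\ forall y, U x y -> G y.

Definition qu_compatible (T : set -> Prop) (Q : rel -> Prop) : Prop :=
  forall G, T G <-> qu_topology Q G.

Definition transitive_qu (Q : rel -> Prop) : Prop :=
  forall U, Q U -> exists V, Q V /\ rsub V U /\
    (forall x y z, V x y -> V y z -> V x z).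

Definition in_T (T : set -> Prop) (Q : rel -> Prop) : Prop :=
  quasi_uniformity Q /\ qu_compatible T Q /\ transitive_qu Q.

Definition quasi_proximity (d : set -> set -> Prop) : Prop :=
  (forall A A' B B', set_eq A A' -> set_eq B B' -> d A B -> d A' B') /\
  (forall A B C, d A (setU B C) <-> d A B \/ d A C) /\
  (forall A B C, d (setU A B) C <-> d A C \/ d B C) /\
  ~ d emptyset fullset /\ ~ d fullset emptyset /\
  (forall A B, (exists x, A x /\ B x) -> d A B) /\
  (forall A B, ~ d A B -> exists C, ~ d A C /\ ~ d (compl C) B).

Definition qp_topology (d : set -> set -> Prop) (G : set) : Prop :=
  forall x, G x -> ~ d (single x) (compl G).

Definition qp_compatible (T : set -> Prop) (d : set -> set -> Prop) : Prop :=
  forall G, T G <-> qp_topology d G.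

Definition qu_qprox (Q : rel -> Prop) (A B : set) : Prop :=
  forall U, Q U -> exists a b, A a /\ B b /\ U a b.

Definition pi_delta (d : set -> set -> Prop) (Q : rel -> Prop) : Prop :=
  quasi_uniformity Q /\ forall A B, qu_qprox Q A B <-> d A B.

(* V_delta: the (totally bounded) quasi-uniformity with subbase
   { ((X\A) x X) u (X x (X\B)) : A non-delta B }, the coarsest element of pi(delta) *)
Definition V_delta (d : set -> set -> Prop) (W : rel) : Prop :=
  exists l : list (set * set),
    (forall p, In p l -> ~ d (fst p) (snd p)) /\
    (forall x y, (forall p, In p l -> ~ fst p x \/ ~ snd p y) -> W x y).

End Defs.

(* Lindelöf, local compactness and zero-dimensionality give an increasing
   sequence (H n) of compact open sets exhausting X, each strictly contained in
   the next and δ-far from its complement.  For D ⊆ ℕ the preorder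
   "x ∈ H k ⇒ y ∈ H k for all k ∈ D" is transitive and does not change δ:
   if A is δ-near B, some a ∈ A and b ∈ B are related both by it and by any
   given basic entourage of V_δ.  So V_δ together with the preorders of D_p,
   p ∈ S, generates a transitive compatible quasi-uniformity Q_S ∈ π(δ).
   Taking {D_p : p ∈ 2^ℕ} almost disjoint with arbitrarily long blocks makes
   S ↦ Q_S injective: if p ∉ S', points w_k ∈ H (k+1) \ H k indexed along a
   long block of D_p that misses D_q for finitely many q ∈ S' are related by
   the preorders of these D_q, and by pigeonhole two of them are also related
   by a given V_δ-entourage, although D_p separates them. *)

From Stdlib Require Import List Arith Lia Classical ClassicalEpsilon FunctionalExtensionality Cantor.
Import ListNotations.

Definition far_list {X} (d : set X -> set X -> Prop) (l : list (set X * set X)) : Prop :=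
  forall p, In p l -> ~ d (fst p) (snd p).

(* [V_delta d W] unfolds to [exists l, far_list d l /\ rsub (vrel l) W]. *)
Definition vrel {X} (l : list (set X * set X)) : rel X :=
  fun x y => forall p, In p l -> ~ fst p x \/ ~ snd p y.

Section QuasiProximity.
Context {X : Type} {d : set X -> set X -> Prop}.
Hypothesis Hd : quasi_proximity d.

Lemma near_eq A A' B B' : set_eq A A' -> set_eq B B' -> d A B -> d A' B'.
Proof. exact (proj1 Hd A A' B B'). Qed.

Lemma near_setUl A B C : d (setU A B) C <-> d A C \/ d B C.
Proof. exact (proj1 (proj2 (proj2 Hd)) A B C). Qed.

Lemma near_setUr A B C : d A (setU B C) <-> d A B \/ d A C.
Proof. exact (proj1 (proj2 Hd) A B C). Qed.

Lemma near_subl A A' B : subset A A' -> d A B -> d A' B.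
Proof.
  intros sAA' dAB. apply (near_eq (setU A A') A' B B).
  - intro x; unfold setU; split; [intros [h|h]|]; auto.
  - intro; tauto.
  - apply near_setUl; auto.
Qed.

Lemma near_subr A B B' : subset B B' -> d A B -> d A B'.
Proof.
  intros sBB' dAB. apply (near_eq A A (setU B B') B').
  - intro; tauto.
  - intro x; unfold setU; split; [intros [h|h]|]; auto.
  - apply near_setUr; auto.
Qed.

Lemma near_inhabited A B : d A B -> (exists a, A a) /\ (exists b, B b).
Proof.
  destruct Hd as (_ & _ & _ & H0X & HX0 & _).
  intro dAB; split; apply NNPP; intro hempty.
  - apply H0X, (near_subr _ B); [intros ? _; exact I|].
    refine (near_eq A _ B B _ _ dAB); [|intro; tauto].
    intro x; split; [intro; apply hempty; eauto|intros []].
  - apply HX0, (near_subl A); [intros ? _; exact I|].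
    refine (near_eq A A B _ _ _ dAB); [intro; tauto|].
    intro x; split; [intro; apply hempty; eauto|intros []].
Qed.

Lemma near_meet A B x : A x -> B x -> d A B.
Proof. intros a b; apply (proj1 (proj2 (proj2 (proj2 (proj2 (proj2 Hd)))))); eauto. Qed.

Lemma far_disjoint A B x : ~ d A B -> A x -> B x -> False.
Proof. intros fAB a b; exact (fAB (near_meet A B x a b)). Qed.

Lemma vrel_of_same_profile l x y : far_list d l ->
  (forall P, In P (map fst l) -> (P x <-> P y)) -> vrel l x y.
Proof.
  intros hl hxy p hp. destruct (classic (fst p x)) as [h|h]; [right|left; exact h].
  intro h'. apply (far_disjoint _ _ y (hl p hp)); [|exact h'].
  apply hxy; [apply in_map, hp|exact h].
Qed.

Lemma near_splitl A B (P : set X) :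
  d A B -> d (fun x => A x /\ P x) B \/ d (fun x => A x /\ ~ P x) B.
Proof.
  intro dAB. apply near_setUl.
  refine (near_eq A _ B B _ _ dAB); [|intro; tauto].
  intro x; unfold setU; split; [intro; destruct (classic (P x))|]; tauto.
Qed.

Lemma near_splitr A B (P : set X) :
  d A B -> d A (fun x => B x /\ P x) \/ d A (fun x => B x /\ ~ P x).
Proof.
  intro dAB. apply near_setUr.
  refine (near_eq A A B _ _ _ dAB); [intro; tauto|].
  intro x; unfold setU; split; [intro; destruct (classic (P x))|]; tauto.
Qed.

Lemma far_bigcupl (l : list (set X)) B :
  (forall U, In U l -> ~ d U B) -> ~ d (fun y => exists U, In U l /\ U y) B.
Proof.
  induction l as [|U l IH]; intros hl h.
  - destruct (near_inhabited _ _ h) as [[x [U [[] _]]] _].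
  - assert (hU : d (setU U (fun y => exists V, In V l /\ V y)) B).
    { refine (near_eq _ _ B B _ _ h); [|intro; tauto].
      intro x; unfold setU; split.
      - intros [V [[<-|hV] hx]]; [left|right; exists V]; auto.
      - intros [hx|[V [hV hx]]]; [exists U|exists V]; simpl; auto. }
    apply near_setUl in hU as [hU|hU].
    + exact (hl U (or_introl eq_refl) hU).
    + exact (IH (fun V hV => hl V (or_intror hV)) hU).
Qed.

Lemma far_compl_setU A B :
  ~ d A (compl A) -> ~ d B (compl B) -> ~ d (setU A B) (compl (setU A B)).
Proof.
  intros fA fB h. apply near_setUl in h as [h|h].
  - apply fA, (near_subr _ _ _ (fun x hx hA => hx (or_introl hA)) h).
  - apply fB, (near_subr _ _ _ (fun x hx hB => hx (or_intror hB)) h).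
Qed.

Lemma far_compl_eq A A' : set_eq A A' -> ~ d A (compl A) -> ~ d A' (compl A').
Proof.
  intros hAA' fA h. apply fA. refine (near_eq A' A _ _ _ _ h).
  - intro x; split; apply hAA'.
  - intro x; unfold compl; split; intros h1 h2; apply h1, hAA', h2.
Qed.

Lemma far_interpolate A B : ~ d A B -> exists C, ~ d A C /\ ~ d (compl C) B.
Proof. exact (proj2 (proj2 (proj2 (proj2 (proj2 (proj2 Hd))))) A B). Qed.

Lemma near_refine_pair P Q A B : ~ d P Q -> d A B ->
  exists A' B', subset A' A /\ subset B' B /\ d A' B' /\
    forall a b, A' a -> B' b -> ~ P a \/ ~ Q b.
Proof.
  intros fPQ dAB. destruct (near_splitl A B P dAB) as [hP|hnP].
  - destruct (near_splitr _ B Q hP) as [hQ|hnQ].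
    + exfalso. apply fPQ. refine (near_subl _ _ _ _ (near_subr _ _ _ _ hQ)); intros ? ?; tauto.
    + exists A, (fun x => B x /\ ~ Q x); repeat split; try (intros ? ?; tauto).
      refine (near_subl _ _ _ _ hnQ); intros ? ?; tauto.
  - exists (fun x => A x /\ ~ P x), B; repeat split; try (intros ? ?; tauto); auto.
Qed.

Lemma near_refine_vrel l A B : far_list d l -> d A B ->
  exists A' B', subset A' A /\ subset B' B /\ d A' B' /\
    forall a b, A' a -> B' b -> vrel l a b.
Proof.
  revert A B; induction l as [|[P Q] l IH]; intros A B hl dAB.
  - exists A, B; split; [intros x hx; exact hx|split; [intros x hx; exact hx|split; [exact dAB|]]].
    intros a b _ _ p [].
  - destruct (near_refine_pair P Q A B (hl _ (or_introl eq_refl)) dAB)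
      as (A1 & B1 & hA1 & hB1 & d1 & h1).
    destruct (IH A1 B1 (fun p hp => hl p (or_intror hp)) d1) as (A2 & B2 & hA2 & hB2 & d2 & h2).
    exists A2, B2; split; [intros x hx; auto|split; [intros x hx; auto|split; [exact d2|]]].
    intros a b ha hb p [<-|hp]; [apply h1|apply h2]; auto.
Qed.

End QuasiProximity.

Section Compactness.
Context {X : Type} (tau : set X -> Prop).

Lemma compact_eq K K' : set_eq K K' -> compact tau K -> compact tau K'.
Proof.
  intros hKK' hK F hF hcov. destruct (hK F hF) as [l [hl hl_cov]].
  - intros x hx; apply hcov, hKK', hx.
  - exists l; split; auto. intros x hx; apply hl_cov, hKK', hx.
Qed.

Lemma compact_empty K : (forall x, ~ K x) -> compact tau K.
Proof.
  intros hK F _ _. exists nil; split; [intros ? []|].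
  intros x hx; destruct (hK x hx).
Qed.

Lemma compact_setU K1 K2 : compact tau K1 -> compact tau K2 -> compact tau (setU K1 K2).
Proof.
  intros h1 h2 F hF hcov.
  destruct (h1 F hF (fun x hx => hcov x (or_introl hx))) as [l1 [hl1 cov1]].
  destruct (h2 F hF (fun x hx => hcov x (or_intror hx))) as [l2 [hl2 cov2]].
  exists (l1 ++ l2); split.
  - intros U hU; apply in_app_iff in hU as [hU|hU]; auto.
  - intros x [hx|hx]; [destruct (cov1 x hx) as [U [hU hUx]]|destruct (cov2 x hx) as [U [hU hUx]]];
      exists U; rewrite in_app_iff; auto.
Qed.

Lemma compact_closed_subset K C : compact tau K -> subset C K -> tau (compl C) -> compact tau C.
Proof.
  intros hK hCK hC F hF hcov.
  destruct (hK (fun U => F U \/ U = compl C)) as [l [hl hl_cov]].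
  - intros U [hU| ->]; auto.
  - intros x hx. destruct (classic (C x)) as [h|h].
    + destruct (hcov x h) as [U [hU hUx]]; eauto.
    + exists (compl C); auto.
  - pose (inF U := if excluded_middle_informative (F U) then true else false).
    exists (filter inF l); split.
    + intros U hU; apply filter_In in hU as [_ hU]; unfold inF in hU.
      destruct (excluded_middle_informative (F U)); [auto|discriminate].
    + intros x hx. destruct (hl_cov x (hCK x hx)) as [U [hU hUx]].
      exists U; split; [|exact hUx]. apply filter_In; split; [exact hU|]; unfold inF.
      destruct (excluded_middle_informative (F U)) as [|hnF]; [reflexivity|].
      destruct (hl U hU) as [hFU| ->]; [contradiction|destruct (hUx hx)].
Qed.

Context {d : set X -> set X -> Prop}.
Hypotheses (Hd : quasi_proximity d) (Hc : qp_compatible tau d).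

Lemma open_far_from C : tau (fun y => ~ d (single y) C).
Proof.
  apply Hc. intros y hy hd.
  destruct (far_interpolate Hd _ _ hy) as [E [hyE hEC]].
  apply hyE. refine (near_subr Hd _ _ _ _ hd).
  intros z hz. apply NNPP; intro hzE. apply hz; intro hzC.
  apply hEC. refine (near_subl Hd (single z) _ _ _ hzC).
  intros u hu; unfold single in hu; subst u; exact hzE.
Qed.

Lemma compact_far K G : compact tau K -> subset K G -> tau G -> ~ d K (compl G).
Proof.
  intros hK hKG hG.
  pose (F U := exists C, ~ d (compl C) (compl G) /\ U = (fun y => ~ d (single y) C)).
  destruct (hK F) as [l [hl hl_cov]].
  - intros U [C [_ ->]]. apply open_far_from.
  - intros x hx. apply Hc in hG.
    destruct (far_interpolate Hd _ _ (hG x (hKG x hx))) as [C [hxC hCG]].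
    exists (fun y => ~ d (single y) C); split; [exists C|]; auto.
  - intro hKG'. apply (far_bigcupl Hd l (compl G)).
    + intros U hU. destruct (hl U hU) as [C [hCG ->]]. intro h.
      apply hCG. refine (near_subl Hd _ _ _ _ h).
      intros y hy hCy. exact (hy (near_meet Hd _ _ y eq_refl hCy)).
    + exact (near_subl Hd K _ _ hl_cov hKG').
Qed.

End Compactness.

Record far_chain {X} (d : set X -> set X -> Prop) (H : nat -> set X) : Prop := {
  chain_mono : forall n x, H n x -> H (S n) x;
  chain_far : forall n, ~ d (H n) (compl (H n));
  chain_cover : forall x, exists n, H n x }.
Arguments chain_mono {X d H}.
Arguments chain_far {X d H}.
Arguments chain_cover {X d H}.

Lemma chain_le {X} (H : nat -> set X) :
  (forall n x, H n x -> H (S n) x) -> forall n m x, n <= m -> H n x -> H m x.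
Proof. intros Hmono n m x hnm; induction hnm; auto. Qed.

Definition partial_union {X} (g : nat -> set X) (n : nat) : set X :=
  fun x => exists m, m <= n /\ g m x.

Lemma partial_union_ind {X} (P : set X -> Prop) (g : nat -> set X) :
  (forall A A', set_eq A A' -> P A -> P A') ->
  (forall A B, P A -> P B -> P (setU A B)) ->
  (forall m, P (g m)) -> forall n, P (partial_union g n).
Proof.
  intros Peq PU Pg n; induction n as [|n IH].
  - apply (Peq (g 0)); [|apply Pg].
    intro x; split; [intro hx; exists 0; auto|intros [m [hm hx]]].
    replace m with 0 in hx by lia; exact hx.
  - apply (Peq (setU (partial_union g n) (g (S n)))); [|apply PU; auto].
    intro x; unfold setU, partial_union; split.
    + intros [[m [hm hx]]|hx]; [exists m|exists (S n)]; split; auto.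
    + intros [m [hm hx]]. destruct (Nat.eq_dec m (S n)) as [->|hne]; [right; auto|].
      left; exists m; split; [lia|auto].
Qed.

Section Exhaustion.
Context {X : Type} (tau : set X -> Prop) {d : set X -> set X -> Prop}.
Hypotheses (Hd : quasi_proximity d) (Hc : qp_compatible tau d).

Lemma compact_clopen_far_nbhd x : locally_compact tau -> zero_dimensional tau ->
  exists C, tau C /\ compact tau C /\ ~ d C (compl C) /\ C x.
Proof.
  intros Hlc Hzd.
  destruct (Hlc x) as (U & K & hU & hxU & hUK & hK).
  destruct (Hzd U x hU hxU) as (C & hC & hCc & hxC & hCU).
  assert (hCK : compact tau C).
  { apply (compact_closed_subset tau K); auto. intros y hy; apply hUK, hCU, hy. }
  exists C; repeat split; auto.
  apply (compact_far tau Hd Hc); auto. intros y hy; exact hy.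
Qed.

Lemma far_chain_exhaustion :
  locally_compact tau -> ~ compact tau (@fullset X) -> lindelof tau -> zero_dimensional tau ->
  exists G, far_chain d G /\ forall n, exists y, ~ G n y.
Proof.
  intros Hlc Hnc Hlin Hzd.
  destruct (Hlin (fun U => tau U /\ compact tau U /\ ~ d U (compl U))) as [g [hg hg_cov]].
  - intros U hU; apply hU.
  - intro x. destruct (compact_clopen_far_nbhd x Hlc Hzd) as (C & hC & hCc & hCf & hx).
    exists C; auto.
  - assert (hg' : forall m, compact tau (g m) /\ ~ d (g m) (compl (g m))).
    { intro m. destruct (hg m) as [h|hempty]; [split; apply h|split].
      - apply compact_empty. intros x hx; exact (proj1 (hempty x) hx).
      - intro h. destruct (near_inhabited Hd _ _ h) as [[x hx] _]. exact (proj1 (hempty x) hx). }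
    exists (partial_union g); split; [constructor|].
    + intros n x [m [hm hx]]; exists m; split; auto.
    + apply (partial_union_ind (fun A => ~ d A (compl A)));
        [exact (far_compl_eq Hd)|exact (far_compl_setU Hd)|apply hg'].
    + intro x. destruct (hg_cov x) as [m hm]. exists m, m; auto.
    + intro n. apply NNPP; intro hfull. apply Hnc.
      apply (compact_eq tau (partial_union g n)).
      * intro x; split; [intros _; exact I|intros _].
        apply NNPP; intro hx; apply hfull; eauto.
      * apply partial_union_ind; [apply compact_eq|apply compact_setU|apply hg'].
Qed.

End Exhaustion.

Lemma far_chain_strict_subchain {X} {d : set X -> set X -> Prop} (G : nat -> set X) :
  far_chain d G -> (forall n, exists y, ~ G n y) ->
  exists (H : nat -> set X) (w : nat -> X),
    far_chain d H /\ forall n, ~ H n (w n) /\ H (S n) (w n).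
Proof.
  intros HG Gproper. pose proof (chain_le G (chain_mono HG)) as Gle.
  destruct (choice (fun m (p : nat * X) => ~ G m (snd p) /\ G (fst p) (snd p))) as [next hnext].
  { intro m. destruct (Gproper m) as [y hy]. destruct (chain_cover HG y) as [m' hm'].
    exists (m', y); auto. }
  assert (hlt : forall m, m < fst (next m)).
  { intro m. destruct (hnext m) as [hout hin]. apply Nat.nle_gt; intro hle.
    exact (hout (Gle _ _ _ hle hin)). }
  pose (f n := Nat.iter n (fun m => fst (next m)) 0).
  assert (hf : forall n, n <= f n).
  { induction n as [|n IH]; [lia|]. specialize (hlt (f n)). simpl; fold (f n); lia. }
  exists (fun n => G (f n)), (fun n => snd (next (f n))); split; [constructor|].
  - intros n x hx. apply Gle with (f n); [|exact hx]. specialize (hlt (f n)). simpl; lia.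
  - intro n; apply (chain_far HG).
  - intro x. destruct (chain_cover HG x) as [m hm]. exists m. apply Gle with m; auto.
  - intro n; apply hnext.
Qed.

Definition chain_pre {X} (H : nat -> set X) (D : nat -> Prop) : rel X :=
  fun x y => forall k, D k -> H k x -> H k y.

Definition chain_qu {X Idx} (d : set X -> set X -> Prop) (H : nat -> set X)
  (D : Idx -> nat -> Prop) (S : Idx -> Prop) (W : rel X) : Prop :=
  exists l L, far_list d l /\ (forall i, In i L -> S i) /\
    forall x y, vrel l x y -> (forall i, In i L -> chain_pre H (D i) x y) -> W x y.

Lemma chain_qu_vrel {X Idx} d H (D : Idx -> nat -> Prop) S (l : list (set X * set X)) :
  far_list d l -> chain_qu d H D S (vrel l).
Proof.
  intro hl. exists l, nil; split; [exact hl|split; [intros ? []|]].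
  intros x y hxy _; exact hxy.
Qed.

Lemma chain_qu_chain_pre {X Idx} d (H : nat -> set X) (D : Idx -> nat -> Prop) S i :
  S i -> chain_qu d H D S (chain_pre H (D i)).
Proof.
  intro hi. exists nil, [i]; split; [intros ? []|split; [intros j [<-|[]]; exact hi|]].
  intros x y _ hpre. exact (hpre i (or_introl eq_refl)).
Qed.

Section FarChain.
Context {X : Type} {d : set X -> set X -> Prop} {H : nat -> set X}.
Hypotheses (Hd : quasi_proximity d) (HH : far_chain d H).

Lemma near_localize A B N : subset A (H N) -> d A B -> d A (fun x => B x /\ H N x).
Proof.
  intros hA dAB. destruct (near_splitr Hd A B (H N) dAB) as [h|h]; [exact h|].
  exfalso. apply (chain_far HH N).
  refine (near_subl Hd _ _ _ hA (near_subr Hd _ _ _ _ h)). intros x hx; exact (proj2 hx).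
Qed.

Lemma chain_pre_of_step n a b : ~ H n a -> H (S n) b -> chain_pre H (fun _ => True) a b.
Proof.
  intros ha hb k _ hka. apply (chain_le H (chain_mono HH)) with (S n); [|exact hb].
  apply Nat.nle_gt; intro hkn. exact (ha (chain_le H (chain_mono HH) _ _ _ hkn hka)).
Qed.

Lemma near_chain_witness A B : d A B ->
  exists a b, A a /\ B b /\ chain_pre H (fun _ => True) a b.
Proof.
  intro dAB.
  (* Take the first layer H N \ H (N-1) of A that is near B; as H N is far from
     its complement, the point of B can then be taken inside H N. *)
  assert (layer : forall N, d (fun x => A x /\ H N x) B ->
    exists a b, A a /\ B b /\ chain_pre H (fun _ => True) a b).
  { induction N as [|N IH]; intro hN.
    - destruct (near_inhabited Hd _ _ (near_localize _ _ 0 (fun x hx => proj2 hx) hN))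
        as [[a ha] [b hb]].
      exists a, b; split; [tauto|split; [tauto|]].
      intros k _ _. apply (chain_le H (chain_mono HH)) with 0; [lia|tauto].
    - destruct (near_splitl Hd _ B (H N) hN) as [h|h].
      + apply IH. refine (near_subl Hd _ _ _ _ h). intros x hx; tauto.
      + destruct (near_inhabited Hd _ _
          (near_localize _ _ (S N) (fun x hx => proj2 (proj1 hx)) h)) as [[a ha] [b hb]].
        exists a, b; split; [tauto|split; [tauto|]].
        apply chain_pre_of_step with N; tauto. }
  destruct (near_inhabited Hd _ _ dAB) as [_ [b hb]].
  destruct (chain_cover HH b) as [M hM].
  destruct (near_splitl Hd A B (H M) dAB) as [h|h]; [exact (layer M h)|].
  destruct (near_inhabited Hd _ _ h) as [[a ha] _].
  exists a, b; split; [tauto|split; [tauto|]].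
  apply chain_pre_of_step with M; [tauto|exact (chain_mono HH _ _ hM)].
Qed.

Lemma near_witness l A B : far_list d l -> d A B ->
  exists a b, A a /\ B b /\ vrel l a b /\ chain_pre H (fun _ => True) a b.
Proof.
  intros hl dAB.
  destruct (near_refine_vrel Hd l A B hl dAB) as (A' & B' & hA' & hB' & d' & hvrel).
  destruct (near_chain_witness A' B' d') as (a & b & ha & hb & hab).
  exists a, b; auto.
Qed.

Variables (Idx : Type) (D : Idx -> nat -> Prop) (S : Idx -> Prop).

Lemma chain_qu_transitive : transitive_qu (V_delta d) -> transitive_qu (chain_qu d H D S).
Proof.
  intros Htr W (l & L & hl & hL & hW).
  destruct (Htr (vrel l)) as (T & (l' & hl' & hT) & hTl & Ttrans).
  { exists l; split; [exact hl|auto]. }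
  exists (fun x y => T x y /\ forall i, In i L -> chain_pre H (D i) x y).
  split; [|split].
  - exists l', L; split; [exact hl'|split; [exact hL|]]. auto.
  - intros x y [hxy hpre]. apply hW; auto.
  - intros x y z [hxy pxy] [hyz pyz]; split; [eauto|].
    intros i hi k hk hx. apply (pyz i hi k hk), (pxy i hi k hk), hx.
Qed.

Lemma chain_qu_quasi_uniformity :
  transitive_qu (V_delta d) -> quasi_uniformity (chain_qu d H D S).
Proof.
  intro Htr. split; [|split; [|split; [|split]]].
  - exists nil, nil; split; [intros ? []|split; [intros ? []|]]. intros; exact I.
  - intros U V (l & L & hl & hL & hU) hUV. exists l, L; split; auto.
  - intros U V (l1 & L1 & hl1 & hL1 & hU) (l2 & L2 & hl2 & hL2 & hV).
    exists (l1 ++ l2), (L1 ++ L2); split; [|split].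
    + intros p hp; apply in_app_iff in hp as [hp|hp]; auto.
    + intros i hi; apply in_app_iff in hi as [hi|hi]; auto.
    + intros x y hxy hpre; split; [apply hU|apply hV];
        [intros p hp; apply hxy|intros i hi; apply hpre
        |intros p hp; apply hxy|intros i hi; apply hpre];
        apply in_app_iff; auto.
  - intros U (l & L & hl & hL & hU) x. apply hU.
    + exact (vrel_of_same_profile Hd l x x hl (fun _ _ => iff_refl _)).
    + intros i _ k _ h; exact h.
  - intros U hU. destruct (chain_qu_transitive Htr U hU) as (V & hV & hVU & Vtrans).
    exists V; split; auto. intros x z [y [hxy hyz]]. apply hVU; eauto.
Qed.

Lemma chain_qu_qprox A B : qu_qprox (chain_qu d H D S) A B <-> d A B.
Proof.
  split.
  - intro hq. apply NNPP; intro fAB.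
    destruct (hq (vrel [(A, B)])) as (a & b & ha & hb & hab).
    { apply chain_qu_vrel. intros p [<-|[]]; exact fAB. }
    destruct (hab (A, B) (or_introl eq_refl)); auto.
  - intros dAB U (l & L & hl & hL & hU).
    destruct (near_witness l A B hl dAB) as (a & b & ha & hb & hab & hpre).
    exists a, b; split; [|split]; auto. apply hU; auto.
    intros i _ k _; apply hpre; exact I.
Qed.

Lemma chain_qu_compatible (tau : set X -> Prop) :
  qp_compatible tau d -> qu_compatible tau (chain_qu d H D S).
Proof.
  intros Hc G; split.
  - intros hG x hx. apply Hc in hG.
    exists (vrel [(single x, compl G)]); split.
    + apply chain_qu_vrel. intros p [<-|[]]; exact (hG x hx).
    + intros y hy. destruct (hy _ (or_introl eq_refl)) as [h|h].
      * exfalso; apply h; reflexivity.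
      * apply NNPP; exact h.
  - intros hq. apply Hc. intros x hx dxG.
    destruct (hq x hx) as (U & (l & L & hl & hL & hU) & hUG).
    destruct (near_witness l _ _ hl dxG) as (a & b & ha & hb & hab & hpre).
    unfold single in ha; subst a. apply hb, hUG, hU; auto.
    intros i _ k _; apply hpre; exact I.
Qed.

End FarChain.

Fixpoint prefix_code (p : nat -> bool) (n : nat) : nat :=
  match n with 0 => 0 | S m => 2 * prefix_code p m + (if p m then 1 else 0) end.

Lemma prefix_code_inj p q n : prefix_code p n = prefix_code q n -> forall i, i < n -> p i = q i.
Proof.
  induction n as [|n IH]; intros hpq i hi; [lia|]. simpl in hpq.
  destruct (p n) eqn:hp, (q n) eqn:hq; assert (prefix_code p n = prefix_code q n) by lia;
    (destruct (Nat.eq_dec i n) as [->|hin]; [congruence || lia|apply IH; auto; lia]).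
Qed.

(* [blocks p] is the union of the intervals [v², v² + n) with v the Cantor code
   of n and of the first n values of p; two such intervals meet only when v is
   the same, hence only when the two sequences agree below n. *)
Definition block_base (p : nat -> bool) (n : nat) : nat := to_nat (n, prefix_code p n).

Definition blocks (p : nat -> bool) (k : nat) : Prop :=
  exists n t, t < n /\ k = block_base p n * block_base p n + t.

Lemma sqrt_block p n t : t < n -> Nat.sqrt (block_base p n * block_base p n + t) = block_base p n.
Proof.
  intro ht. apply Nat.sqrt_unique.
  pose proof (to_nat_non_decreasing n (prefix_code p n)). unfold block_base in *. nia.
Qed.

Lemma blocks_overlap p q n t : t < n -> blocks q (block_base p n * block_base p n + t) ->
  forall i, i < n -> p i = q i.
Proof.
  intros ht [n' [t' [ht' hk]]].
  assert (hbase : block_base p n = block_base q n').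
  { rewrite <- (sqrt_block p n t ht), <- (sqrt_block q n' t' ht'), hk. reflexivity. }
  unfold block_base in hbase. apply (f_equal of_nat) in hbase. rewrite !cancel_of_to in hbase.
  injection hbase as <- hcode. exact (prefix_code_inj p q n hcode).
Qed.

Lemma differ_below (p : nat -> bool) (L : list (nat -> bool)) :
  (forall q, In q L -> q <> p) -> exists N, forall q, In q L -> exists k, k < N /\ p k <> q k.
Proof.
  induction L as [|q L IH]; intro hL.
  - exists 0; intros q [].
  - destruct (IH (fun r hr => hL r (or_intror hr))) as [N hN].
    assert (exists k, p k <> q k) as [k hk].
    { apply NNPP; intro hn. apply (hL q (or_introl eq_refl)).
      apply functional_extensionality; intro k. apply NNPP; intro hk. apply hn; eauto. }
    exists (N + S k); intros r [<-|hr].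
    + exists k; split; [lia|exact hk].
    + destruct (hN r hr) as [k' [hk' hne]]; exists k'; split; [lia|exact hne].
Qed.

Lemma pigeonhole_profile {X} (Ps : list (set X)) (z : nat -> X) (idx : list nat) :
  NoDup idx -> 2 ^ length Ps < length idx ->
  exists i j, In i idx /\ In j idx /\ i < j /\ forall P, In P Ps -> (P (z i) <-> P (z j)).
Proof.
  revert idx; induction Ps as [|P Ps IH]; intros idx hnd hlen.
  - destruct idx as [|a [|b r]]; simpl in hlen; try lia.
    apply NoDup_cons_iff in hnd as [hna _].
    assert (a <> b) by (intro; subst; apply hna; left; reflexivity).
    destruct (Nat.lt_total a b) as [h|[h|h]]; [exists a, b|contradiction|exists b, a];
      (split; [simpl; auto|split; [simpl; auto|split; [exact h|intros ? []]]]).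
  - pose (inP i := if excluded_middle_informative (P (z i)) then true else false).
    assert (hinP : forall i, inP i = true <-> P (z i)).
    { intro i; unfold inP. destruct (excluded_middle_informative (P (z i))); intuition congruence. }
    assert (hhalf : forall sub, NoDup sub -> incl sub idx ->
      (forall i j, In i sub -> In j sub -> inP i = inP j) -> 2 ^ length Ps < length sub ->
      exists i j, In i idx /\ In j idx /\ i < j /\
        forall Q, In Q (P :: Ps) -> (Q (z i) <-> Q (z j))).
    { intros sub hsub_nd hsub hhom hsub_len.
      destruct (IH sub hsub_nd hsub_len) as (i & j & hi & hj & hij & hPs).
      exists i, j; split; [auto|split; [auto|split; [exact hij|]]].
      intros Q [<-|hQ]; [|exact (hPs Q hQ)].
      rewrite <- (hinP i), <- (hinP j), (hhom i j hi hj). reflexivity. }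
    pose proof (filter_length inP idx) as hsplit. simpl in hlen.
    destruct (Nat.lt_ge_cases (2 ^ length Ps) (length (filter inP idx))) as [h|h];
      [apply (hhalf (filter inP idx))|apply (hhalf (filter (fun i => negb (inP i)) idx))];
      try exact (NoDup_filter _ hnd); try lia; try (intros i hi; apply filter_In in hi; tauto);
      intros i j hi hj; apply filter_In in hi as [_ hi], hj as [_ hj].
    + congruence.
    + apply Bool.negb_true_iff in hi, hj. congruence.
Qed.

Section Injectivity.
Context {X : Type} {d : set X -> set X -> Prop} {H : nat -> set X} (w : nat -> X).
Hypotheses (Hd : quasi_proximity d) (Hmono : forall n x, H n x -> H (S n) x)
  (Hw : forall n, ~ H n (w n) /\ H (S n) (w n)).

Lemma chain_pre_witness_gap D a b : a <= b -> (forall k, D k -> a < k <= b -> False) ->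
  chain_pre H D (w a) (w b).
Proof.
  intros hab hgap k hk hka.
  assert (hak : a < k).
  { apply Nat.nle_gt; intro hka'. exact (proj1 (Hw a) (chain_le H Hmono _ _ _ hka' hka)). }
  destruct (Nat.le_gt_cases k b) as [hkb|hbk]; [destruct (hgap k hk (conj hak hkb))|].
  exact (chain_le H Hmono _ _ _ hbk (proj2 (Hw b))).
Qed.

Lemma not_chain_pre_witness D a b : a < b -> D (S a) -> ~ chain_pre H D (w a) (w b).
Proof.
  intros hab hD hpre. apply (proj1 (Hw b)).
  exact (chain_le H Hmono _ _ _ hab (hpre (S a) hD (proj2 (Hw a)))).
Qed.

Lemma chain_qu_blocks_injective (S1 S2 : (nat -> bool) -> Prop) p :
  (forall W, chain_qu d H blocks S1 W -> chain_qu d H blocks S2 W) -> S1 p -> S2 p.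
Proof.
  intros hQ hp1. apply NNPP; intro hp2.
  destruct (hQ _ (chain_qu_chain_pre d H blocks S1 p hp1)) as (l & L & hl & hL & hW).
  destruct (differ_below p L) as [N hN].
  { intros q hq <-. exact (hp2 (hL q hq)). }
  set (n := N + 2 ^ length (map fst l) + 1). set (v := block_base p n).
  destruct (pigeonhole_profile (map fst l) (fun t => w (v * v + t)) (seq 0 n) (seq_NoDup n 0))
    as (i & j & hi & hj & hij & hprofile).
  { rewrite length_seq. unfold n; lia. }
  apply in_seq in hi, hj.
  apply (not_chain_pre_witness (blocks p) (v * v + i) (v * v + j)); [lia| |].
  { exists n, (S i); split; [lia|unfold v; lia]. }
  apply hW.
  - exact (vrel_of_same_profile Hd l _ _ hl hprofile).
  - intros q hq. apply chain_pre_witness_gap; [lia|]. intros k hk hik.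
    destruct (hN q hq) as [m [hm hpq]]. apply hpq.
    apply (blocks_overlap p q n (k - v * v)); [lia| |unfold n; lia].
    replace (block_base p n * block_base p n + (k - v * v)) with k by (unfold v in *; lia).
    exact hk.
Qed.

End Injectivity.

Theorem corollary2p13 (X : Type) (tau : set X -> Prop)
  (delta : set X -> set X -> Prop) :
  is_topology tau -> hausdorff tau -> locally_compact tau ->
  ~ compact tau (@fullset X) -> lindelof tau -> zero_dimensional tau ->
  quasi_proximity delta -> qp_compatible tau delta ->
  transitive_qu (V_delta delta) ->
  exists f : ((nat -> bool) -> Prop) -> (rel X -> Prop),
    (forall S, pi_delta delta (f S) /\ in_T tau (f S)) /\
    (forall S S', (forall W, f S W <-> f S' W) -> forall p, S p <-> S' p).
Proof.
  intros _ _ Hlc Hnc Hlin Hzd Hd Hc Htr.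
  destruct (far_chain_exhaustion tau Hd Hc Hlc Hnc Hlin Hzd) as (G & HG & Gproper).
  destruct (far_chain_strict_subchain G HG Gproper) as (H & w & HH & Hw).
  exists (chain_qu delta H blocks). split.
  - intro S. assert (HQ := chain_qu_quasi_uniformity (H := H) Hd _ blocks S Htr).
    split; split; [exact HQ|exact (chain_qu_qprox Hd HH _ blocks S)|exact HQ|split].
    + exact (chain_qu_compatible Hd HH _ blocks S tau Hc).
    + exact (chain_qu_transitive _ blocks S Htr).
  - intros S1 S2 hS p.
    split; apply (chain_qu_blocks_injective w Hd (chain_mono HH) Hw); intro W; apply hS.
Qed.
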